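(* Let $G=(X,Y,E)$ be a bipartite graph with non-negative weights $\omega_e$ on its edges $e\in E$ and positive integer weights $s_x$ on its vertices $x\in X$ such that $\sum_{x\in X}s_x\ge|E|$. Suppose that for all $x\in X$ and all $y\in Y$, $$\sum_{e\in\delta_G(x)}\omega_e>\frac{s_x-1}{|Y|}\qquad\text{and}\qquad\sum_{e\in\delta_G(y)}\omega_e=\frac{1}{|Y|}.$$ Then every vertex $x\in X$ has degree exactly $s_x$ in $G$.
   Context: $\delta_G(z)$ denotes the set of edges of $G$ incident to the vertex $z$. *)

From HB Require Import structures.
From mathcomp Require Import all_boot all_order all_algebra.
Set Implicit Arguments. Unset Strict Implicit. Unset Printing Implicit Defensive.

(* A bipartite graph G = (X, Y, E) is given by two finite vertex classes
   X, Y and an edge set E : {set X * Y}; the edge (x, y) joins x and y. *)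

Definition deltaX (X Y : finType) (E : {set X * Y}) (x : X) : {set X * Y} :=
  [set e in E | e.1 == x].

Definition deltaY (X Y : finType) (E : {set X * Y}) (y : Y) : {set X * Y} :=
  [set e in E | e.2 == y].

(* Every edge weight is a summand of the non-negative sum at its endpoint in
   Y, so it is at most 1/|Y|.  Hence the weight at x in X is at most
   deg(x)/|Y|, and the hypothesis forces deg(x) > s_x - 1, i.e.
   deg(x) >= s_x.  Summing over X, |E| = sum deg(x) >= sum s_x >= |E|, so
   all these inequalities are equalities. *)
From HB Require Import structures.
From mathcomp Require Import all_boot all_order all_algebra.
Set Implicit Arguments. Unset Strict Implicit. Unset Printing Implicit Defensive.
Import Order.TTheory GRing.Theory Num.Theory.
Local Open Scope ring_scope.

Lemma ler_sum_summand (R : numDomainType) (I : finType) (A : {pred I})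
    (F : I -> R) (i : I) :
  (forall j, j \in A -> 0 <= F j) -> i \in A -> F i <= \sum_(j in A) F j.
Proof.
move=> F_ge0 Ai; rewrite (bigD1 i) //= lerDl.
by apply: sumr_ge0 => j /andP[Aj _]; apply: F_ge0.
Qed.

Lemma leq_card_bounded_sum (R : numDomainType) (I : finType) (A : {pred I})
    (F : I -> R) (c : R) (k : nat) :
  0 < c -> (forall i, i \in A -> F i <= c) ->
  (k%:R - 1) * c < \sum_(i in A) F i -> (k <= #|A|)%N.
Proof.
move=> c_gt0 F_le_c lt_sum.
have sum_le : \sum_(i in A) F i <= #|A|%:R * c.
  by rewrite mulr_natl -sumr_const; apply: ler_sum.
have := lt_le_trans lt_sum sum_le.
by rewrite ltr_pM2r // ltrBlDr natr1 ltr_nat ltnS.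
Qed.

Lemma leq_sum_eq (I : finType) (a b : I -> nat) :
  (forall i, (a i <= b i)%N) ->
  (\sum_(i : I) b i <= \sum_(i : I) a i)%N -> forall i, a i = b i.
Proof.
move=> le_ab; rewrite (geq_leqif (leqif_sum (fun i _ => leqif_eq (le_ab i)))).
by move=> /forall_inP eq_ab i; apply/eqP/eq_ab.
Qed.

Section BipartiteGraph.

Variables (X Y : finType) (E : {set X * Y}).

Lemma card_edges_deltaX : #|E| = (\sum_(x : X) #|deltaX E x|)%N.
Proof.
rewrite -sum1_card (partition_big (fun e : X * Y => e.1) predT) //=.
by apply: eq_bigr => x _; rewrite -sum1_card; apply: eq_bigl => e; rewrite inE.
Qed.

Lemma edge_weight_le (R : numDomainType) (w : X * Y -> R) (c : R) :
  (forall e, e \in E -> 0 <= w e) ->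
  (forall y, \sum_(e in deltaY E y) w e = c) ->
  forall e, e \in E -> w e <= c.
Proof.
move=> w_ge0 sumY e Ee; rewrite -(sumY e.2).
apply: ler_sum_summand; last by rewrite inE Ee eqxx.
by move=> f; rewrite inE => /andP[Ef _]; apply: w_ge0.
Qed.

End BipartiteGraph.

Theorem lemma2p8 (R : realFieldType) (X Y : finType) (E : {set X * Y})
    (w : X * Y -> R) (s : X -> nat)
    (hY : (0 < #|Y|)%N)
    (hw : forall e, e \in E -> 0 <= w e)
    (hs : forall x : X, (0 < s x)%N)
    (hsum : (#|E| <= \sum_(x : X) s x)%N)
    (hX : forall x : X,
        ((s x)%:R - 1) / (#|Y|)%:R < \sum_(e in deltaX E x) w e)
    (hYc : forall y : Y, \sum_(e in deltaY E y) w e = 1 / (#|Y|)%:R) :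
  forall x : X, #|deltaX E x| = s x.
Proof.
have invY_gt0 : 0 < (#|Y|%:R : R)^-1 by rewrite invr_gt0 ltr0n.
have w_le : forall e, e \in E -> w e <= #|Y|%:R^-1.
  by apply: edge_weight_le hw _ => y; rewrite hYc div1r.
have s_le_deg x : (s x <= #|deltaX E x|)%N.
  apply: leq_card_bounded_sum invY_gt0 _ (hX x) => e.
  by rewrite inE => /andP[Ee _]; apply: w_le.
move=> x; symmetry; apply: (leq_sum_eq s_le_deg).
by rewrite -card_edges_deltaX.
Qed.
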